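(* Let $\alpha=2\sqrt7-4$. Fix $\varepsilon>0$ and let $\delta=3\varepsilon/8$. For every balanced tetrahedral erasure channel $W$ with $Q(W)\le\alpha-\varepsilon$, we have $Q(W^{s})\ge Q(W)\bigl(1+H(W)\delta\bigr)$ and $Q(W^{p})\ge Q(W)\bigl(1+(1-H(W))\delta\bigr)$.
   Context: $\mathrm{TEC}(p,q,r,s,t)$ denotes a tetrahedral erasure channel with parameters $p,q,r,s,t\ge0$ summing to $1$. Its entropy is $H=\frac{q+r+s}{2}+t$, its edge mass is $E=q+r+s$, and its Quetelet index is $Q=E/(H(1-H))$ (defined when $0<H<1$). It is balanced if $q=r=s$. For $W=\mathrm{TEC}(p,q,r,s,t)$, the serial child is $W^{s}=\mathrm{TEC}(p^2,\ ps+sq+qp,\ pq+qr+rp,\ pr+rs+sp,\ 1-\text{(sum of the other four)})$ and the parallel child is $W^{p}=\mathrm{TEC}(1-\text{(sum of the other four)},\ ts+sq+qt,\ tq+qr+rt,\ tr+rs+st,\ t^2)$. *)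

From HB Require Import structures.
From mathcomp Require Import all_boot all_order all_algebra.
Set Implicit Arguments. Unset Strict Implicit. Unset Printing Implicit Defensive.
Import Order.TTheory GRing.Theory Num.Theory.
Local Open Scope ring_scope.

Record tec (R : rcfType) := TEC { tp : R; tq : R; tr : R; ts : R; tt : R }.

Section TEC.
Variable R : rcfType.
Implicit Types W : tec R.

Definition is_tec W : Prop :=
  [/\ 0 <= tp W, 0 <= tq W, 0 <= tr W, 0 <= ts W & 0 <= tt W]
  /\ tp W + tq W + tr W + ts W + tt W = 1.

Definition tec_H W : R := (tq W + tr W + ts W) / 2 + tt W.
Definition tec_E W : R := tq W + tr W + ts W.
(* Quetelet index (meaningful when 0 < H < 1). *)
Definition tec_Q W : R := tec_E W / (tec_H W * (1 - tec_H W)).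

Definition balanced W : Prop := tq W = tr W /\ tr W = ts W.

Definition serial_child W : tec R :=
  let p := tp W in let q := tq W in let r := tr W in let s := ts W in
  let p' := p ^+ 2 in
  let q' := p * s + s * q + q * p in
  let r' := p * q + q * r + r * p in
  let s' := p * r + r * s + s * p in
  TEC p' q' r' s' (1 - (p' + q' + r' + s')).

Definition parallel_child W : tec R :=
  let q := tq W in let r := tr W in let s := ts W in let t := tt W in
  let q' := t * s + s * q + q * t in
  let r' := t * q + q * r + r * t in
  let s' := t * r + r * s + s * t in
  let t' := t ^+ 2 in
  TEC (1 - (q' + r' + s' + t')) q' r' s' t'.

Definition alpha : R := 2 * Num.sqrt 7 - 4.
End TEC.

(* For a balanced channel with edge mass E and entropy H, the serial child has
   E' = 2E(1 - H - E/3) and 1 - H' = (1 - H)^2 - E^2/12.  Writing E = k H (1 - H)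
   with k = Q(W), the growth factor Q(W^s)/Q(W) becomes an explicit rational
   function of H and k, and the required bound reduces to 12 - 8k - k^2 >= 9 eps;
   this is where alpha, the positive root of k^2 + 8k - 12, comes from.
   Swapping the roles of p and t exchanges H and 1 - H, preserves Q and turns the
   parallel child into the serial child, so the parallel bound follows. *)

From HB Require Import structures.
From mathcomp Require Import all_boot all_order all_algebra.
From mathcomp Require Import ring lra.
Import Order.TTheory GRing.Theory Num.Theory.
Set Implicit Arguments. Unset Strict Implicit. Unset Printing Implicit Defensive.
Local Open Scope ring_scope.

Section Alpha.
Variable R : rcfType.

Lemma alpha_root : alpha R ^+ 2 + 8 * alpha R = 12.
Proof.
have s7 : Num.sqrt (7 : R) ^+ 2 = 7 by rewrite sqr_sqrtr.
by rewrite /alpha; nra.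
Qed.

Lemma alpha_ge1 : 1 <= alpha R.
Proof.
have s7 : Num.sqrt (7 : R) ^+ 2 = 7 by rewrite sqr_sqrtr.
have := sqrtr_ge0 (7 : R); rewrite /alpha; nra.
Qed.

Lemma alpha_lt2 : alpha R < 2.
Proof.
have s7 : Num.sqrt (7 : R) ^+ 2 = 7 by rewrite sqr_sqrtr.
have := sqrtr_ge0 (7 : R); rewrite /alpha; nra.
Qed.

End Alpha.

Lemma alpha_gap (R : rcfType) (k eps : R) : 0 <= k -> 0 <= eps -> k <= alpha R - eps ->
  9 * eps <= 12 - 8 * k - k ^+ 2.
Proof.
move=> k0 eps0 hk.
have -> : 12 - 8 * k - k ^+ 2 = (alpha R - k) * (alpha R + 8 + k).
  by rewrite -(alpha_root R); ring.
have := alpha_ge1 R; nra.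
Qed.

Lemma serial_factor_bound (R : rcfType) (h k eps : R) :
  0 < h < 1 -> 0 <= k -> 0 <= eps -> k <= alpha R - eps ->
  (1 + h * (3 * eps / 8)) * (2 - h + (1 - h) ^+ 2 * k ^+ 2 * h / 12) <=
  2 * (1 - k * h / 3).
Proof.
move=> /andP[h0 h1] k0 eps0 hk.
have gap := alpha_gap k0 eps0 hk.
have k2 : k ^+ 2 <= 4 by have := alpha_lt2 R; nra.
set A := 2 - h + _.
have A_le2 : A <= 2 by rewrite /A; nra.
have slack : 3 * eps / 8 * A <= 1 - (1 - h) ^+ 2 * k ^+ 2 / 12 - 2 * k / 3.
  have : (1 - h) ^+ 2 * k ^+ 2 <= k ^+ 2 by nra.
  have : eps * A <= eps * 2 by exact: ler_wpM2l.
  lra.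
rewrite -subr_ge0.
have -> : 2 * (1 - k * h / 3) - (1 + h * (3 * eps / 8)) * A =
    h * ((1 - (1 - h) ^+ 2 * k ^+ 2 / 12 - 2 * k / 3) - 3 * eps / 8 * A).
  by rewrite /A; ring.
by apply: mulr_ge0; lra.
Qed.

Lemma serial_quetelet_bound (R : rcfType) (h k E eps : R) :
  0 < h < 1 -> 0 <= k -> 0 <= eps -> k <= alpha R - eps -> E = k * h * (1 - h) ->
  let D := (1 - h) ^+ 2 - E ^+ 2 / 12 in
  k * (1 + h * (3 * eps / 8)) <= 2 * E * ((1 - h) - E / 3) / ((1 - D) * D).
Proof.
move=> h01 k0 eps0 hk -> /=; have /andP[h0 h1] := h01.
have factor := serial_factor_bound h01 k0 eps0 hk.
set A := 2 - h + _ in factor.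
set B := 1 - k ^+ 2 * h ^+ 2 / 12.
have k2 : k ^+ 2 <= 4 by have := alpha_lt2 R; nra.
have B0 : 0 < B by rewrite /B; nra.
have B1 : B <= 1 by rewrite /B; nra.
have A0 : 0 < A by rewrite /A; nra.
have [-> ->] : 1 - ((1 - h) ^+ 2 - (k * h * (1 - h)) ^+ 2 / 12) = h * A /\
               (1 - h) ^+ 2 - (k * h * (1 - h)) ^+ 2 / 12 = (1 - h) ^+ 2 * B.
  by split; rewrite /A /B; ring.
have -> : 2 * (k * h * (1 - h)) * ((1 - h) - k * h * (1 - h) / 3) =
          (k * h * (1 - h) ^+ 2) * (2 * (1 - k * h / 3)) by ring.
have khg0 : 0 <= k * h * (1 - h) ^+ 2 by apply: mulr_ge0; nra.
rewrite ler_pdivlMr; last by rewrite !mulr_gt0 ?exprn_gt0 // subr_gt0.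
have -> : k * (1 + h * (3 * eps / 8)) * (h * A * ((1 - h) ^+ 2 * B)) =
          (k * h * (1 - h) ^+ 2) * ((1 + h * (3 * eps / 8)) * A * B) by ring.
apply: ler_wpM2l => //; apply: le_trans factor.
by rewrite -[X in _ <= X]mulr1; apply: ler_wpM2l => //; apply: mulr_ge0; nra.
Qed.

Definition tec_dual (R : rcfType) (W : tec R) : tec R :=
  TEC (tt W) (tq W) (tr W) (ts W) (tp W).

Section Channels.
Variable R : rcfType.
Implicit Types W : tec R.

Lemma is_tec_dual W : is_tec W -> is_tec (tec_dual W).
Proof. by case=> [[p0 q0 r0 s0 t0] sum1]; split=> //; rewrite -sum1 /=; ring. Qed.

Lemma tec_H_dual W : tp W + tq W + tr W + ts W + tt W = 1 ->
  tec_H (tec_dual W) = 1 - tec_H W.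
Proof.
move=> sum1; rewrite /tec_H /=.
have -> : tp W = 1 - tq W - tr W - ts W - tt W by rewrite -sum1; ring.
by field.
Qed.

Lemma tec_Q_dual W : tp W + tq W + tr W + ts W + tt W = 1 ->
  tec_Q (tec_dual W) = tec_Q W.
Proof. by move=> sum1; rewrite /tec_Q tec_H_dual // subKr [(1 - _) * _]mulrC. Qed.

Lemma tec_sum_serial_child W :
  let S := serial_child W in tp S + tq S + tr S + ts S + tt S = 1.
Proof. by rewrite /=; ring. Qed.

Lemma parallel_childE W : parallel_child W = tec_dual (serial_child (tec_dual W)).
Proof. by rewrite /parallel_child /serial_child /tec_dual /=; congr TEC; ring. Qed.

Lemma tec_E_Q W : tec_H W * (1 - tec_H W) != 0 ->
  tec_E W = tec_Q W * tec_H W * (1 - tec_H W).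
Proof. by move=> HH0; rewrite /tec_Q -mulrA divfK. Qed.

Lemma tec_Q_ge0 W : is_tec W -> 0 < tec_H W < 1 -> 0 <= tec_Q W.
Proof.
case=> [[_ q0 r0 s0 _] _] /andP[H0 H1].
by rewrite /tec_Q /tec_E divr_ge0 ?addr_ge0 // mulr_ge0 ?subr_ge0 // ltW.
Qed.

Lemma tec_E_serial_child W :
  tp W + tq W + tr W + ts W + tt W = 1 -> balanced W ->
  tec_E (serial_child W) = 2 * tec_E W * ((1 - tec_H W) - tec_E W / 3).
Proof.
case: W => p q r s t /= sum1 [/= qr rs]; subst r s.
have -> : p = 1 - 3 * q - t by lra.
by rewrite /tec_E /tec_H /=; field.
Qed.

Lemma tec_H_serial_child W :
  tp W + tq W + tr W + ts W + tt W = 1 -> balanced W ->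
  1 - tec_H (serial_child W) = (1 - tec_H W) ^+ 2 - tec_E W ^+ 2 / 12.
Proof.
case: W => p q r s t /= sum1 [/= qr rs]; subst r s.
have -> : p = 1 - 3 * q - t by lra.
by rewrite /tec_E /tec_H /=; field.
Qed.

End Channels.

Lemma tec_Q_serial_child_ge (R : rcfType) (eps : R) (W : tec R) :
  0 <= eps -> is_tec W -> balanced W -> 0 < tec_H W < 1 ->
  tec_Q W <= alpha R - eps ->
  tec_Q W * (1 + tec_H W * (3 * eps / 8)) <= tec_Q (serial_child W).
Proof.
move=> eps0 tecW balW H01 Qle.
have sum1 := tecW.2.
have HH0 : tec_H W * (1 - tec_H W) != 0.
  by case/andP: H01 => H0 H1; rewrite mulf_neq0 // ?subr_eq0 gt_eqF.
have := serial_quetelet_bound H01 (tec_Q_ge0 tecW H01) eps0 Qle (tec_E_Q HH0).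
by rewrite /= -tec_H_serial_child // -tec_E_serial_child // subKr.
Qed.

Theorem mainTheorem6 (R : rcfType) (eps : R) (Heps : 0 < eps) (W : tec R) :
  is_tec W -> balanced W ->
  0 < tec_H W < 1 ->
  tec_Q W <= alpha R - eps ->
  let delta := 3 * eps / 8 in
  tec_Q W * (1 + tec_H W * delta) <= tec_Q (serial_child W) /\
  tec_Q W * (1 + (1 - tec_H W) * delta) <= tec_Q (parallel_child W).
Proof.
move=> tecW balW H01 Qle delta; have eps0 := ltW Heps.
split; first exact: tec_Q_serial_child_ge.
have sum1 := tecW.2.
rewrite parallel_childE tec_Q_dual ?tec_sum_serial_child //.
rewrite -(tec_Q_dual sum1) -(tec_H_dual sum1) in Qle *.
apply: tec_Q_serial_child_ge => //; first exact: is_tec_dual.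
by rewrite tec_H_dual //; case/andP: H01 => H0 H1; apply/andP; split; lra.
Qed.
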